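(* Fix $n\ge0$, a formula $\phi\in\mathcal{L}^1$ and a label $w$. (i) If $\mathtt{Prove_n}(w:\phi)$ returns true, then $w:\phi$ is derivable in $\mathsf{Ldm}_{n}^{1}\mathsf{L}$. (ii) If $\mathtt{Prove_n}(w:\phi)$ returns false, then $w:\phi$ is not derivable in $\mathsf{Ldm}_{n}^{1}\mathsf{L}$.
   Context: Single-agent setting: $Ag=\{1\}$. Formulas $\phi ::= p \mid \overline{p} \mid (\phi\wedge\phi) \mid (\phi\vee\phi) \mid \Box\phi \mid \Diamond\phi \mid [1]\phi \mid \langle 1\rangle\phi$; $\overline{\phi}$ swaps $p/\overline{p}$, $\wedge/\vee$, $\Box/\Diamond$, $[1]/\langle 1\rangle$. A labelled sequent $\mathcal{R},\Gamma$ consists of a multiset $\mathcal{R}$ of relational atoms $\mathcal{R}_1xy$ and a multiset $\Gamma$ of labelled formulas $x:\phi$. Calculus $\mathsf{Ldm}_{n}^{1}\mathsf{L}$ (premise(s) / conclusion; derivations are finite trees with $(\mathsf{id})$ leaves): $(\mathsf{id})$: / $\mathcal{R}, w:p, w:\overline{p},\Gamma$. $(\wedge)$: $\mathcal{R}, w:\phi\wedge\psi, w:\phi,\Gamma$ and $\mathcal{R}, w:\phi\wedge\psi, w:\psi,\Gamma$ / $\mathcal{R}, w:\phi\wedge\psi,\Gamma$. $(\vee)$: $\mathcal{R}, w:\phi\vee\psi, w:\phi, w:\psi,\Gamma$ / $\mathcal{R}, w:\phi\vee\psi,\Gamma$. $(\Box)$: $\mathcal{R}, w:\Box\phi, v:\phi,\Gamma$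 / $\mathcal{R}, w:\Box\phi,\Gamma$ ($v$ fresh). $(\Diamond)$: $\mathcal{R}, w:\Diamond\phi, u:\phi,\Gamma$ / $\mathcal{R}, w:\Diamond\phi,\Gamma$. $(\mathsf{IOA})$: $\mathcal{R},\mathcal{R}_1uv,\Gamma$ / $\mathcal{R},\Gamma$ ($v$ fresh). $([1])$: $\mathcal{R},\mathcal{R}_1wv, w:[1]\phi, v:\phi,\Gamma$ / $\mathcal{R}, w:[1]\phi,\Gamma$ ($v$ fresh). $(\mathsf{Pr}_1)$: $\mathcal{R}, w:\langle 1\rangle\phi, u:\phi,\Gamma$ / $\mathcal{R}, w:\langle 1\rangle\phi,\Gamma$, applicable only if $w=u$ or there are labels $w=z_0,\dots,z_k=u$ ($k\ge1$) with $\mathcal{R}_1z_lz_{l+1}\in\mathcal{R}$ or $\mathcal{R}_1z_{l+1}z_l\in\mathcal{R}$ for each $l<k$. $(\mathsf{APC}^1_n)$ (only if $n>0$): premises $\mathcal{R},\mathcal{R}_1w_kw_j,\Gamma$ for all $0\le k\le n-1$, $k+1\le j\le n$ / $\mathcal{R},\Gamma$. ''Fresh'' means not occurring in the conclusion. Graphs. $G(\Lambda)$ has the labels of $\Lambda$ as vertices and an edge $(x,y)$ for each $\mathcal{R}_1xy\in\Lambda$. A tree is a graph with a root having exactly one directed path to every other node; a forest is a disjoint union of trees. $\Lambda$ is forestlike iff $G(\Lambda)$ is a forest; its trees are choice-trees; $CT(w)$ is the choice-tree containing $w$. For forestlike $\Lambda$ and label $w$: $w$ is saturated iff (i) $w:\phi\in\Lambda$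 implies $w:\overline{\phi}\notin\Lambda$, (ii) $w:\phi\vee\psi\in\Lambda$ implies $w:\phi,w:\psi\in\Lambda$, (iii) $w:\phi\wedge\psi\in\Lambda$ implies $w:\phi\in\Lambda$ or $w:\psi\in\Lambda$. $w$ is $\Box$-realized iff for each $w:\Box\phi\in\Lambda$ some label $u$ has $u:\phi\in\Lambda$; $[1]$-realized iff for each $w:[1]\phi\in\Lambda$ some $u\in CT(w)$ has $u:\phi\in\Lambda$; $\Diamond$-propagated iff for each $w:\Diamond\phi\in\Lambda$, $u:\phi\in\Lambda$ for all labels $u$; $\langle1\rangle$-propagated iff for each $w:\langle1\rangle\phi\in\Lambda$, $u:\phi\in\Lambda$ for all $u\in CT(w)$. $\Lambda$ is $n$-choice consistent ($n>0$) iff $G(\Lambda)$ has at most $n$ choice-trees. $\Lambda$ is stable iff all labels are saturated, $\Box$- and $[1]$-realized, $\Diamond$- and $\langle1\rangle$-propagated, and (when $n>0$) $\Lambda$ is $n$-choice consistent. Algorithm $\mathtt{Prove_n}(\mathcal{R},\Gamma)$, steps tried in order: 1. If $w:p$ and $w:\overline{p}$ are both present, return true. 2. If the sequent is stable, return false. 3. If some $w$ is not saturated: (i) if $w:\phi\vee\psi$ is present but $w:\phi$ or $w:\psi$ absent, return $\mathtt{Prove_n}(\mathcal{R},w:\phi,w:\psi,\Gamma)$; (ii) if $w:\phi\wedge\psi$ is present but neither $w:\phi$ nor $w:\psi$, return false if $\mathtt{Prove_n}(\mathcal{R},w:\phi,\Gamma)$ or $\mathtt{Prove_n}(\mathcal{R},w:\psi,\Gamma)$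 returns false, else true. 4. If some $w:\langle1\rangle\phi$ is present and some $u\in CT(w)$ has $u:\phi$ absent, return $\mathtt{Prove_n}(\mathcal{R},u:\phi,\Gamma)$. 5. If some $w:\Diamond\phi$ is present and some label $u$ has $u:\phi$ absent, return $\mathtt{Prove_n}(\mathcal{R},u:\phi,\Gamma)$. 6. If some $w:[1]\phi$ is present with $u:\phi$ absent for all $u\in CT(w)$, return $\mathtt{Prove_n}(\mathcal{R},\mathcal{R}_1wv,v:\phi,\Gamma)$, $v$ fresh. 7. If some $w:\Box\phi$ is present with $u:\phi$ absent for all labels $u$, return $\mathtt{Prove_n}(\mathcal{R},v:\phi,\Gamma)$, $v$ fresh. 8. (Only when $n>0$.) If not $n$-choice consistent, pick distinct choice-tree roots $w_0,\dots,w_n$ and return false if $\mathtt{Prove_n}(\mathcal{R},\mathcal{R}_1w_kw_j,\Gamma)$ returns false for some $0\le k\le n-1$, $k+1\le j\le n$, else true. For $n=0$ step 8 is absent and stability omits $n$-choice consistency. *)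

From Stdlib Require Import List Arith Relations.
Import ListNotations.

Inductive form : Type :=
| Var : nat -> form
| NVar : nat -> form
| And : form -> form -> form
| Or : form -> form -> form
| Box : form -> form
| Dia : form -> form
| Stit : form -> form
| Cstit : form -> form.

Fixpoint neg (f : form) : form :=
  match f with
  | Var p => NVar p
  | NVar p => Var p
  | And a b => Or (neg a) (neg b)
  | Or a b => And (neg a) (neg b)
  | Box a => Dia (neg a)
  | Dia a => Box (neg a)
  | Stit a => Cstit (neg a)
  | Cstit a => Stit (neg a)
  end.

(* labels are natural numbers; relational atoms R_1 x y are pairs (x,y);
   labelled formulas x:phi are pairs (x,phi).  A sequent is a pair of lists
   (R, G) read as multisets: every rule below is stated via membership of the
   principal formula and adding premise material at the front, so
   derivability is invariant under permutation. *)
Definition rels := list (nat * nat).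
Definition forms := list (nat * form).

Definition label_in (R : rels) (G : forms) (x : nat) : Prop :=
  (exists y, In (x, y) R \/ In (y, x) R) \/ (exists f, In (x, f) G).

Definition fresh (R : rels) (G : forms) (v : nat) : Prop := ~ label_in R G v.

Definition uedge (R : rels) (a b : nat) : Prop := In (a, b) R \/ In (b, a) R.
Definition connected (R : rels) (x y : nat) : Prop :=
  clos_refl_trans nat (uedge R) x y.

Definition apc_pairs (n : nat) : list (nat * nat) :=
  flat_map (fun k => map (fun j => (k, j)) (seq (S k) (n - k))) (seq 0 n).

Inductive Derivable (n : nat) : rels -> forms -> Prop :=
| d_id : forall R G w p,
    In (w, Var p) G -> In (w, NVar p) G -> Derivable n R G
| d_and : forall R G w a b,
    In (w, And a b) G ->
    Derivable n R ((w, a) :: G) -> Derivable n R ((w, b) :: G) ->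
    Derivable n R G
| d_or : forall R G w a b,
    In (w, Or a b) G ->
    Derivable n R ((w, a) :: (w, b) :: G) -> Derivable n R G
| d_box : forall R G w a v,
    In (w, Box a) G -> fresh R G v ->
    Derivable n R ((v, a) :: G) -> Derivable n R G
| d_dia : forall R G w a u,
    In (w, Dia a) G ->
    Derivable n R ((u, a) :: G) -> Derivable n R G
| d_ioa : forall R G u v,
    fresh R G v ->
    Derivable n ((u, v) :: R) G -> Derivable n R G
| d_stit : forall R G w a v,
    In (w, Stit a) G -> fresh R G v ->
    Derivable n ((w, v) :: R) ((v, a) :: G) -> Derivable n R G
| d_pr : forall R G w a u,
    In (w, Cstit a) G -> connected R w u ->
    Derivable n R ((u, a) :: G) -> Derivable n R G
| d_apc : forall R G (ws : list nat),
    0 < n -> length ws = S n ->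
    (forall k j, In (k, j) (apc_pairs n) ->
       Derivable n ((nth k ws 0, nth j ws 0) :: R) G) ->
    Derivable n R G.

Definition inCT (R : rels) (G : forms) (w u : nat) : Prop :=
  label_in R G u /\ connected R w u.

Definition saturated (R : rels) (G : forms) (w : nat) : Prop :=
  (forall f, In (w, f) G -> ~ In (w, neg f) G) /\
  (forall a b, In (w, Or a b) G -> In (w, a) G /\ In (w, b) G) /\
  (forall a b, In (w, And a b) G -> In (w, a) G \/ In (w, b) G).

Definition box_realized (R : rels) (G : forms) (w : nat) : Prop :=
  forall a, In (w, Box a) G -> exists u, In (u, a) G.
Definition stit_realized (R : rels) (G : forms) (w : nat) : Prop :=
  forall a, In (w, Stit a) G -> exists u, inCT R G w u /\ In (u, a) G.
Definition dia_propagated (R : rels) (G : forms) (w : nat) : Prop :=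
  forall a, In (w, Dia a) G -> forall u, label_in R G u -> In (u, a) G.
Definition cstit_propagated (R : rels) (G : forms) (w : nat) : Prop :=
  forall a, In (w, Cstit a) G -> forall u, inCT R G w u -> In (u, a) G.

Definition choice_consistent (n : nat) (R : rels) (G : forms) : Prop :=
  ~ exists ls : list nat, length ls = S n /\
      (forall x, In x ls -> label_in R G x) /\
      (forall i j, i < S n -> j < S n -> i <> j ->
         ~ connected R (nth i ls 0) (nth j ls 0)).

Definition stable (n : nat) (R : rels) (G : forms) : Prop :=
  (forall w, label_in R G w ->
     saturated R G w /\ box_realized R G w /\ stit_realized R G w /\
     dia_propagated R G w /\ cstit_propagated R G w) /\
  (0 < n -> choice_consistent n R G).

Definition is_root (R : rels) (G : forms) (x : nat) : Prop :=
  label_in R G x /\ forall y, ~ In (y, x) R.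

Definition clash (G : forms) : Prop :=
  exists w p, In (w, Var p) G /\ In (w, NVar p) G.
Definition or_redex_at (G : forms) (w : nat) : Prop :=
  exists a b, In (w, Or a b) G /\ (~ In (w, a) G \/ ~ In (w, b) G).
Definition and_redex_at (G : forms) (w : nat) : Prop :=
  exists a b, In (w, And a b) G /\ ~ In (w, a) G /\ ~ In (w, b) G.
Definition redex3 (G : forms) : Prop :=
  exists w, or_redex_at G w \/ and_redex_at G w.
Definition redex4 (R : rels) (G : forms) : Prop :=
  exists w a u, In (w, Cstit a) G /\ inCT R G w u /\ ~ In (u, a) G.
Definition redex5 (R : rels) (G : forms) : Prop :=
  exists w a u, In (w, Dia a) G /\ label_in R G u /\ ~ In (u, a) G.
Definition redex6 (R : rels) (G : forms) : Prop :=
  exists w a, In (w, Stit a) G /\ forall u, inCT R G w u -> ~ In (u, a) G.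
Definition redex7 (R : rels) (G : forms) : Prop :=
  exists w a, In (w, Box a) G /\ forall u, ~ In (u, a) G.

(* Prove n R G b : some run of Prove_n on (R, G) returns b
   (steps tried in order; choices of w, u, fresh v, roots are arbitrary) *)
Inductive Prove (n : nat) : rels -> forms -> bool -> Prop :=
| p1 : forall R G, clash G -> Prove n R G true
| p2 : forall R G, ~ clash G -> stable n R G -> Prove n R G false
| p3i : forall R G w a b,
    ~ clash G -> ~ stable n R G ->
    In (w, Or a b) G -> (~ In (w, a) G \/ ~ In (w, b) G) ->
    forall r, Prove n R ((w, a) :: (w, b) :: G) r -> Prove n R G r
| p3ii : forall R G w a b,
    ~ clash G -> ~ stable n R G -> ~ or_redex_at G w ->
    In (w, And a b) G -> ~ In (w, a) G -> ~ In (w, b) G ->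
    forall r1 r2, Prove n R ((w, a) :: G) r1 -> Prove n R ((w, b) :: G) r2 ->
    Prove n R G (r1 && r2)
| p4 : forall R G w a u,
    ~ clash G -> ~ stable n R G -> ~ redex3 G ->
    In (w, Cstit a) G -> inCT R G w u -> ~ In (u, a) G ->
    forall r, Prove n R ((u, a) :: G) r -> Prove n R G r
| p5 : forall R G w a u,
    ~ clash G -> ~ stable n R G -> ~ redex3 G -> ~ redex4 R G ->
    In (w, Dia a) G -> label_in R G u -> ~ In (u, a) G ->
    forall r, Prove n R ((u, a) :: G) r -> Prove n R G r
| p6 : forall R G w a v,
    ~ clash G -> ~ stable n R G -> ~ redex3 G -> ~ redex4 R G -> ~ redex5 R G ->
    In (w, Stit a) G -> (forall u, inCT R G w u -> ~ In (u, a) G) ->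
    fresh R G v ->
    forall r, Prove n ((w, v) :: R) ((v, a) :: G) r -> Prove n R G r
| p7 : forall R G w a v,
    ~ clash G -> ~ stable n R G -> ~ redex3 G -> ~ redex4 R G -> ~ redex5 R G ->
    ~ redex6 R G ->
    In (w, Box a) G -> (forall u, ~ In (u, a) G) ->
    fresh R G v ->
    forall r, Prove n R ((v, a) :: G) r -> Prove n R G r
| p8 : forall R G (ws : list nat) (f : nat -> nat -> bool),
    ~ clash G -> ~ stable n R G -> ~ redex3 G -> ~ redex4 R G -> ~ redex5 R G ->
    ~ redex6 R G -> ~ redex7 R G ->
    0 < n -> ~ choice_consistent n R G ->
    length ws = S n -> NoDup ws -> (forall x, In x ws -> is_root R G x) ->
    (forall k j, In (k, j) (apc_pairs n) ->
       Prove n ((nth k ws 0, nth j ws 0) :: R) G (f k j)) ->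
    Prove n R G (forallb (fun kj => f (fst kj) (snd kj)) (apc_pairs n)).

(* (i) Every step of a run of Prove_n is an instance of a rule of the calculus,
   so a run returning true is a derivation read backwards.
   (ii) A run returning false bottoms out in a stable sequent, and the labels of
   a stable sequent form a countermodel: the histories are the labels, the
   choice cells are the connected components of G(R), p holds exactly where
   x:~p occurs, and stability is what makes every x:phi of the sequent false
   at x.  Choice consistency gives APC.  Since the sequents of a run only grow,
   this model refutes the initial w:phi as well, whereas derivable sequents are
   refuted by no model. *)
From Stdlib Require Import List Arith Lia Relations Classical ClassicalEpsilon.
Import ListNotations.

Lemma prove_true_derivable n R G : Prove n R G true -> Derivable n R G.
Proof.
  intros Hrun. remember true as b eqn:Hb. revert Hb.
  induction Hrun as
    [R G [w [p [Hp Hnp]]] | R G _ _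
    | R G w a b _ _ Hor _ r _ IH | R G w a b _ _ _ Hand _ _ r1 r2 _ IH1 _ IH2
    | R G w a u _ _ _ Hcstit [_ Hwu] _ r _ IH | R G w a u _ _ _ _ Hdia _ _ r _ IH
    | R G w a v _ _ _ _ _ Hstit _ Hv r _ IH | R G w a v _ _ _ _ _ _ Hbox _ Hv r _ IH
    | R G ws f _ _ _ _ _ _ _ Hn _ Hlen _ _ _ IH];
    intros Hb; subst.
  - exact (d_id _ _ _ _ _ Hp Hnp).
  - discriminate.
  - eapply d_or; eauto.
  - apply andb_prop in Hb as [Hb1 Hb2]. eapply d_and; eauto.
  - eapply d_pr; eauto.
  - eapply d_dia; eauto.
  - eapply d_stit; eauto.
  - eapply d_box; eauto.
  - apply (d_apc _ _ _ ws Hn Hlen). intros k j Hkj. apply (IH k j Hkj).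
    rewrite forallb_forall in Hb. exact (Hb (k, j) Hkj).
Qed.

Definition upd (I : nat -> nat) (v z : nat) : nat -> nat :=
  fun x => if Nat.eqb x v then z else I x.

Lemma upd_eq I v z : upd I v z v = z.
Proof. unfold upd. now rewrite Nat.eqb_refl. Qed.

Lemma upd_neq I v z x : x <> v -> upd I v z x = I x.
Proof. intros Hx. unfold upd. now destruct (Nat.eqb_spec x v). Qed.

Lemma upd_same_value I v u : upd I v (I u) u = I u.
Proof. unfold upd. destruct (Nat.eqb_spec u v); congruence. Qed.

Lemma label_in_form R G x f : In (x, f) G -> label_in R G x.
Proof. intros Hx. right. eauto. Qed.

Lemma fresh_neq_rel R G v x y : fresh R G v -> In (x, y) R -> x <> v /\ y <> v.
Proof. intros Hv Hxy. split; intros ->; apply Hv; left; eauto. Qed.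

Lemma fresh_neq_form R G v x f : fresh R G v -> In (x, f) G -> x <> v.
Proof. intros Hv Hx ->. exact (Hv (label_in_form R _ _ _ Hx)). Qed.

(* A model is a single moment with history set D, the agent's choice partition
   E and valuation V; labels are interpreted in it by I. *)
Section Semantics.

Variables (D : nat -> Prop) (E : nat -> nat -> Prop) (V : nat -> nat -> Prop).

Fixpoint sat (x : nat) (f : form) : Prop :=
  match f with
  | Var p => V p x
  | NVar p => ~ V p x
  | And a b => sat x a /\ sat x b
  | Or a b => sat x a \/ sat x b
  | Box a => forall y, D y -> sat y a
  | Dia a => exists y, D y /\ sat y a
  | Stit a => forall y, D y -> E x y -> sat y a
  | Cstit a => exists y, D y /\ E x y /\ sat y a
  end.

(* [I] is total because the (Dia) and (APC) rules may mention labels that do not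
   occur in the sequent; this is why a countermodel needs a default label. *)
Definition refutes (I : nat -> nat) (R : rels) (G : forms) : Prop :=
  (forall x, D (I x)) /\
  (forall x y, In (x, y) R -> E (I x) (I y)) /\
  (forall x f, In (x, f) G -> ~ sat (I x) f).

Lemma refutes_incl I R G R' G' :
  refutes I R' G' -> incl R R' -> incl G G' -> refutes I R G.
Proof. intros [HD [HR HG]] HRR HGG. repeat split; auto. Qed.

Lemma refutes_cons_form I R G x f :
  refutes I R G -> ~ sat (I x) f -> refutes I R ((x, f) :: G).
Proof.
  intros [HD [HR HG]] Hf. repeat split; auto.
  intros y g [[=<- <-] | Hy]; auto.
Qed.

Lemma refutes_cons_rel I R G x y :
  refutes I R G -> E (I x) (I y) -> refutes I ((x, y) :: R) G.
Proof.
  intros [HD [HR HG]] Hxy. repeat split; auto.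
  intros a b [[=<- <-] | Hab]; auto.
Qed.

Lemma refutes_upd_fresh I R G v z :
  fresh R G v -> D z -> refutes I R G -> refutes (upd I v z) R G.
Proof.
  intros Hv Hz [HD [HR HG]]. repeat split.
  - intros x. unfold upd. now destruct (Nat.eqb x v).
  - intros x y Hxy. destruct (fresh_neq_rel _ _ _ _ _ Hv Hxy).
    rewrite !upd_neq by assumption. auto.
  - intros x f Hx. rewrite upd_neq by exact (fresh_neq_form _ _ _ _ _ Hv Hx).
    auto.
Qed.

Lemma refutes_extend_fresh I R G v z a :
  fresh R G v -> D z -> ~ sat z a -> refutes I R G ->
  refutes (upd I v z) R ((v, a) :: G).
Proof.
  intros Hv Hz Ha HI. apply refutes_cons_form.
  - now apply refutes_upd_fresh.
  - now rewrite upd_eq.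
Qed.

Hypothesis E_equiv : equivalence nat E.

Lemma refutes_connected I R G x y :
  refutes I R G -> connected R x y -> E (I x) (I y).
Proof.
  intros [_ [HR _]] Hxy. destruct E_equiv as [Erefl Etrans Esym].
  induction Hxy as [x y [Hxy | Hyx] | x | x y z _ IHxy _ IHyz].
  - auto.
  - apply Esym. auto.
  - apply Erefl.
  - eapply Etrans; eauto.
Qed.

End Semantics.

Definition at_most_n_choices (n : nat) (D : nat -> Prop) (E : nat -> nat -> Prop) :=
  0 < n -> forall f : nat -> nat, (forall i, D (f i)) ->
  exists i j, i < j <= n /\ E (f i) (f j).

Definition dstit_frame (n : nat) (D : nat -> Prop) (E : nat -> nat -> Prop) :=
  equivalence nat E /\ at_most_n_choices n D E.

Definition refutable (n : nat) (R : rels) (G : forms) : Prop :=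
  exists D E V I, dstit_frame n D E /\ refutes D E V I R G.

Lemma refutable_incl n R G R' G' :
  refutable n R' G' -> incl R R' -> incl G G' -> refutable n R G.
Proof.
  intros [D [E [V [I [HF HI]]]]] HRR HGG.
  exists D, E, V, I. split; [exact HF | eapply refutes_incl; eauto].
Qed.

Lemma in_apc_pairs n k j : k < j <= n -> In (k, j) (apc_pairs n).
Proof.
  intros Hkj. apply in_flat_map. exists k. split.
  - apply in_seq. lia.
  - apply in_map_iff. exists j. split; [reflexivity | apply in_seq; lia].
Qed.

Lemma derivable_not_refutes n D E V R G :
  dstit_frame n D E -> Derivable n R G -> forall I, ~ refutes D E V I R G.
Proof.
  intros [HE Hchoices].
  induction 1 as [R G w p Hp Hnp
                 | R G w a b Hab _ IHa _ IHb
                 | R G w a b Hab _ IH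
                 | R G w a v Hbox Hv _ IH
                 | R G w a u Hdia _ IH
                 | R G u v Hv _ IH
                 | R G w a v Hstit Hv _ IH
                 | R G w a u Hcstit Hwu _ IH
                 | R G ws Hn _ _ IH];
    intros I HI; pose proof HI as [HD [_ HG]].
  - exact (HG _ _ Hnp (HG _ _ Hp)).
  - specialize (HG _ _ Hab). simpl in HG.
    destruct (classic (sat D E V (I w) a)) as [Ha | Ha];
      [apply (IHb I) | apply (IHa I)]; apply refutes_cons_form; tauto.
  - specialize (HG _ _ Hab). simpl in HG.
    apply (IH I). apply refutes_cons_form; [apply refutes_cons_form |]; tauto.
  - specialize (HG _ _ Hbox). simpl in HG.
    apply not_all_ex_not in HG as [z Hz]. apply imply_to_and in Hz as [Dz Hz].
    apply (IH (upd I v z)). now apply refutes_extend_fresh.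
  - specialize (HG _ _ Hdia). simpl in HG.
    apply (IH I). apply refutes_cons_form; [exact HI |]. intros Ha. apply HG. eauto.
  - apply (IH (upd I v (I u))).
    apply refutes_cons_rel; [now apply refutes_upd_fresh |].
    rewrite upd_same_value, upd_eq. apply HE.
  - specialize (HG _ _ Hstit). simpl in HG.
    apply not_all_ex_not in HG as [z Hz].
    apply imply_to_and in Hz as [Dz Hz]. apply imply_to_and in Hz as [Ez Hz].
    apply (IH (upd I v z)).
    apply refutes_cons_rel; [now apply refutes_extend_fresh |].
    rewrite upd_eq, upd_neq by exact (fresh_neq_form _ _ _ _ _ Hv Hstit).
    exact Ez.
  - specialize (HG _ _ Hcstit). simpl in HG.
    apply (IH I). apply refutes_cons_form; [exact HI |]. intros Ha. apply HG.
    exists (I u). split; [apply HD | split; [eapply refutes_connected |]]; eauto.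
  - destruct (Hchoices Hn (fun i => I (nth i ws 0)) (fun i => HD _))
      as [k [j [Hkj Ekj]]].
    apply (IH k j (in_apc_pairs _ _ _ Hkj) I). now apply refutes_cons_rel.
Qed.

Lemma derivable_not_refutable n R G : Derivable n R G -> ~ refutable n R G.
Proof.
  intros Hder [D [E [V [I [HF HI]]]]].
  exact (derivable_not_refutes n D E V R G HF Hder I HI).
Qed.

Lemma connected_equivalence R : equivalence nat (connected R).
Proof.
  split.
  - intros x. apply rt_refl.
  - intros x y z. apply rt_trans.
  - intros x y Hxy. induction Hxy as [x y [Hxy | Hyx] | x | x y z _ IHxy _ IHyz].
    + apply rt_step. now right.
    + apply rt_step. now left.
    + apply rt_refl.
    + eapply rt_trans; eauto.
Qed.

Lemma nth_map_seq (f : nat -> nat) m i : i < m -> nth i (map f (seq 0 m)) 0 = f i.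
Proof.
  intros Hi. rewrite nth_indep with (d' := f 0).
  - now rewrite map_nth, seq_nth.
  - now rewrite length_map, length_seq.
Qed.

Lemma choice_consistent_at_most_n_choices n R G :
  choice_consistent n R G -> at_most_n_choices n (label_in R G) (connected R).
Proof.
  intros Hcc _ f Hf. apply NNPP. intros Hno. apply Hcc.
  exists (map f (seq 0 (S n))). split; [| split].
  - now rewrite length_map, length_seq.
  - intros x Hx. apply in_map_iff in Hx as [i [<- _]]. apply Hf.
  - intros i j Hi Hj Hij Hconn. rewrite !nth_map_seq in Hconn by assumption.
    apply Hno. destruct (Nat.lt_gt_cases i j) as [[Hlt | Hlt] _]; [exact Hij | |].
    + exists i, j. split; [lia | exact Hconn].
    + exists j, i. split; [lia |]. now apply connected_equivalence.
Qed.

Definition canonical_val (G : forms) (p x : nat) : Prop := In (x, NVar p) G.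

Lemma stable_truth n R G f x :
  stable n R G -> In (x, f) G ->
  ~ sat (label_in R G) (connected R) (canonical_val G) x f.
Proof.
  intros [Hst _]. revert x.
  induction f as [p | p | a IHa b IHb | a IHa b IHb | a IH | a IH | a IH | a IH];
    intros x Hx; simpl;
    destruct (Hst x (label_in_form R _ _ _ Hx))
      as [[Hcompl [Hor Hand]] [Hbox [Hstit [Hdia Hcstit]]]].
  - exact (Hcompl _ Hx).
  - tauto.
  - intros [Sa Sb].
    destruct (Hand _ _ Hx) as [Ha | Hb]; [exact (IHa _ Ha Sa) | exact (IHb _ Hb Sb)].
  - destruct (Hor _ _ Hx) as [Ha Hb].
    intros [Sa | Sb]; [exact (IHa _ Ha Sa) | exact (IHb _ Hb Sb)].
  - intros Hall. destruct (Hbox _ Hx) as [u Hu].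
    exact (IH _ Hu (Hall _ (label_in_form R _ _ _ Hu))).
  - intros [y [Ly Sy]]. exact (IH _ (Hdia _ Hx _ Ly) Sy).
  - intros Hall. destruct (Hstit _ Hx) as [u [[Lu Cu] Hu]].
    exact (IH _ Hu (Hall _ Lu Cu)).
  - intros [y [Ly [Cy Sy]]]. exact (IH _ (Hcstit _ Hx y (conj Ly Cy)) Sy).
Qed.

Lemma stable_refutable n R G w0 f0 :
  In (w0, f0) G -> stable n R G -> refutable n R G.
Proof.
  intros Hw0 Hstable.
  set (I x := if excluded_middle_informative (label_in R G x) then x else w0).
  assert (HI : forall x, label_in R G x -> I x = x).
  { intros x Hx. unfold I. now destruct (excluded_middle_informative _). }
  exists (label_in R G), (connected R), (canonical_val G), I.
  split; [split; [apply connected_equivalence |] |].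
  - intros Hn.
    exact (choice_consistent_at_most_n_choices _ _ _ (proj2 Hstable Hn) Hn).
  - repeat split.
    + intros x. unfold I. destruct (excluded_middle_informative _); [assumption |].
      exact (label_in_form R _ _ _ Hw0).
    + intros x y Hxy. rewrite !HI by (left; eauto). apply rt_step. now left.
    + intros x f Hx. rewrite HI by exact (label_in_form R _ _ _ Hx).
      now apply (stable_truth n).
Qed.

Lemma forallb_false_exists {A} (p : A -> bool) l :
  forallb p l = false -> exists x, In x l /\ p x = false.
Proof.
  induction l as [| a l IH]; simpl; [discriminate |].
  destruct (p a) eqn:Ha; simpl; intros Hl.
  - destruct (IH Hl) as [x [Hx Hpx]]. eauto.
  - eauto.
Qed.

Lemma prove_false_refutable n R G w0 f0 :
  Prove n R G false -> In (w0, f0) G -> refutable n R G.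
Proof.
  intros Hrun. remember false as b eqn:Hb. revert Hb.
  induction Hrun as
    [R G _ | R G _ Hstable
    | R G w a b _ _ _ _ r _ IH | R G w a b _ _ _ _ _ _ r1 r2 _ IH1 _ IH2
    | R G w a u _ _ _ _ _ _ r _ IH | R G w a u _ _ _ _ _ _ _ r _ IH
    | R G w a v _ _ _ _ _ _ _ _ r _ IH | R G w a v _ _ _ _ _ _ _ _ _ r _ IH
    | R G ws f _ _ _ _ _ _ _ _ _ _ _ _ _ IH];
    intros Hb Hw0; subst;
    try solve [eapply refutable_incl; [apply IH | |]; auto with datatypes].
  - discriminate.
  - exact (stable_refutable _ _ _ _ _ Hw0 Hstable).
  - apply Bool.andb_false_iff in Hb as [Hb | Hb];
      eapply refutable_incl; [apply IH1 | | | apply IH2 | |]; auto with datatypes.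
  - apply forallb_false_exists in Hb as [[k j] [Hkj Hf]].
    eapply refutable_incl;
      [exact (IH k j Hkj Hf Hw0) | auto with datatypes | apply incl_refl].
Qed.

Theorem theorem5 (n : nat) (phi : form) (w : nat) :
  (Prove n [] [(w, phi)] true -> Derivable n [] [(w, phi)]) /\
  (Prove n [] [(w, phi)] false -> ~ Derivable n [] [(w, phi)]).
Proof.
  split.
  - apply prove_true_derivable.
  - intros Hrun Hder. apply (derivable_not_refutable _ _ _ Hder).
    eapply prove_false_refutable; [exact Hrun | now left].
Qed.
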